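(* In the setting of the context, assume (G1), (G2), (G3). Let $M:=(2c_D^2c^2c_1^2)\vee(3cc_2)$, let $k\in\mathbb N$ with $M\le M_0^k$ and $\alpha_0^k<1/4$, put $\alpha_M:=\alpha_0^k$ and let $0<\alpha\le\alpha_M$. Then there exists $\delta_0>0$ such that for every $x\in X_0$ and $0<r<R_0(x)$, $$\mu_x^{U(x,\alpha^2r)}(U(x,r))>\delta_0.$$
   Context: $(X,\rho)$ separable metric space, $X_0\subseteq X$ open; $\mathcal M(X)$ finite Borel measures (extended to universally measurable sets), $\|\mu\|=\mu(X)$, $\varepsilon_x$ Dirac measure. For every open $U\subseteq X$ and $x\in X$ a measure $\mu_x^U\in\mathcal M(X)$ is given such that for all open $U,V$ and $x$: $\mu_x^U(U)=0$, $\|\mu_x^U\|\le1$, $\mu_x^U=\varepsilon_x$ if $x\notin U$; $y\mapsto\mu_y^U(E)$ universally measurable for Borel $E$; $\mu_x^U=\int\mu_y^U\,d\mu_x^V(y)$ if $V\subseteq U$. For closed $A$, $\varepsilon_x^A:=\mu_x^{X\setminus A}$. $\mathcal U(X_0)$: open $U$ with $\overline U\subseteq X_0$; $U(x,r)$ open ball; $R_0(x):=\sup\{r>0:\overline{U(x,r)}\subseteq X_0\}$. $G\colon X\times X\to(0,\infty]$ Borel, $G\mu(x)=\int G(x,y)d\mu(y)$, $\operatorname{cap}A:=\sup\{\|\mu\|:\mu\in\mathcal M(X),\mu(X\setminus A)=0,G\mu\le1\}$. (G1): there is $c_1\ge1$ such that for all $U\in\mathcal U(X_0)$, $x\in U$,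 $\delta>0$, closed $A\subseteq U$ there are a closed neighborhood $B\subseteq U$ of $A$ and a measure $\nu$ carried by $B$ with $\|\varepsilon_x^B\|-\delta<c_1\|\varepsilon_x^A\|$ and $\|\varepsilon_y^A\|\le G\nu(y)\le c_1\|\varepsilon_y^B\|$ for all $y$. (G2): there are a strictly decreasing continuous $g\colon[0,\infty)\to(0,\infty]$ and $c,c_D,M_0\in[1,\infty)$, $\alpha_0\in(0,1)$ with $g(r/2)\le c_Dg(r)$, $M_0g(r)\le g(\alpha_0r)$ for all $r>0$ and $c^{-1}g\circ\rho\le G\le c\,g\circ\rho$. (G3): there is $c_2\ge1$ with $\operatorname{cap}U(x,r)\ge c_2^{-1}g(r)^{-1}$ for all $x\in X_0$, $0<r<R_0(x)$. *)

From HB Require Import structures.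
From mathcomp Require Import all_boot all_order all_algebra.
From mathcomp Require Import all_classical all_reals all_analysis.
From mathcomp Require Import measurable_realfun.
Set Implicit Arguments. Unset Strict Implicit. Unset Printing Implicit Defensive.
Import Order.TTheory GRing.Theory Num.Theory.
Import numFieldNormedType.Exports.
Local Open Scope classical_set_scope.
Local Open Scope ring_scope.

Section Defs.
Context {R : realType} {X : Type} (rho : X -> X -> R).

Definition is_metric : Prop :=
  [/\ forall x y, 0 <= rho x y,
      forall x y, rho x y = 0 <-> x = y,
      forall x y, rho x y = rho y x &
      forall x y z, rho x z <= rho x y + rho y z].

Definition rball (x : X) (r : R) : set X := [set y | rho x y < r].

Definition separable_rho : Prop :=
  exists D : set X, countable D /\
    forall x (r : R), 0 < r -> exists y, D y /\ rho x y < r.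

Definition ropen (U : set X) : Prop :=
  forall x, U x -> exists2 r : R, 0 < r & rball x r `<=` U.

Definition rclosed (A : set X) : Prop := ropen (~` A).

Definition rclosure (U : set X) : set X :=
  [set x | forall r : R, 0 < r -> exists y, U y /\ rho x y < r].

Definition rnbhd_of (A B : set X) : Prop :=
  forall a, A a -> exists2 r : R, 0 < r & rball a r `<=` B.

Definition calU (X0 U : set X) : Prop := ropen U /\ rclosure U `<=` X0.

Definition R0 (X0 : set X) (x : X) : \bar R :=
  ereal_sup [set r%:E | r in [set r : R | 0 < r /\ rclosure (rball x r) `<=` X0]].
End Defs.

Section Meas.
Context {R : realType} {d : measure_display} {X : measurableType d}.

(* universally measurable sets: measurable for the completion of
   every finite (Borel) measure *)
Definition umeasurable (S : set X) : Prop :=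
  forall m : {measure set X -> \bar R}, (m setT < +oo)%E ->
    exists B1 B2 : set X, [/\ measurable B1, measurable B2,
      B1 `<=` S, S `<=` B2 & m (B2 `\` B1) = 0%E].

Definition umeasurable_fun (f : X -> \bar R) : Prop :=
  forall a : R, umeasurable [set y | (f y < a%:E)%E].

Definition meas_eq (m1 m2 : {measure set X -> \bar R}) : Prop :=
  forall E, measurable E -> m1 E = m2 E.

Definition Gpot (G : X -> X -> \bar R) (m : {measure set X -> \bar R}) (x : X)
  : \bar R := (\int[m]_y G x y)%E.

Definition cap (G : X -> X -> \bar R) (A : set X) : \bar R :=
  ereal_sup [set m setT | m in [set m : {measure set X -> \bar R} |
     (m setT < +oo)%E /\ m (~` A) = 0%E /\ forall x, (Gpot G m x <= 1)%E]].
End Meas.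

From HB Require Import structures.
From mathcomp Require Import all_boot all_order all_algebra.
From mathcomp Require Import all_classical all_reals all_analysis.
From mathcomp Require Import measurable_realfun.
From mathcomp Require Import ring lra.
Import Order.TTheory GRing.Theory Num.Theory.
Import numFieldNormedType.Exports.
Local Open Scope classical_set_scope.
Local Open Scope ring_scope.
Local Open Scope ereal_scope.

(* Put t = alpha r and let A be the closed annulus alpha t <= rho(x, .) <= t.
   (G1) provides a measure nu carried by a neighbourhood B of A inside
   B(x, 2t) with mu_y^{~A}(X) <= G nu(y) <= c1 mu_y^{~B}(X).  Testing the
   capacity bound (G3) for B(x, t) against nu, via Fubini and the
   quasi-symmetry of G, shows that nu(X) is at least of order 1 / g(2t); hence
   G nu(x), and with it mu_x^{~B}(X), is bounded below.  On the other hand,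
   sweeping onto V = B(x, alpha t) bounds mu_x^{~A}(X) by mu_x^V(B(x, r)) plus
   the potential of nu outside B(x, r), which the choice of k makes small
   compared with g(2t) nu(X).  Comparing the two bounds leaves a lower bound
   for mu_x^V(B(x, r)) that depends only on the constants. *)

Section finite_copy.
Context {d} {T : measurableType d} {R : realType}.
Context {m : {measure set T -> \bar R}} (mT : m setT < +oo).

(* [mT] is threaded into the body so that the finite-measure instance below,
   which needs it, can be attached to the constant [finite_copy mT]. *)
Definition finite_copy : set T -> \bar R := let _ := mT in m.

HB.instance Definition _ := isMeasure.Build _ _ _ finite_copy
  (measure0 m) (@measure_ge0 _ _ _ m) (@measure_semi_sigma_additive _ _ _ m).

Let finite_copy_fin_num : fin_num_fun finite_copy.
Proof.
move=> A mA; rewrite ge0_fin_numE//; apply: le_lt_trans mT.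
by apply: le_measure => //; rewrite inE.
Qed.

HB.instance Definition _ := @Measure_isFinite.Build _ T _ finite_copy
  finite_copy_fin_num.
End finite_copy.

Lemma fubini_tonelli_finite {d1 d2} {T1 : measurableType d1}
    {T2 : measurableType d2} {R : realType}
    {m1 : {measure set T1 -> \bar R}} {m2 : {measure set T2 -> \bar R}}
    (m1T : m1 setT < +oo) (m2T : m2 setT < +oo) (f : T1 * T2 -> \bar R) :
  measurable_fun setT f -> (forall p, 0 <= f p) ->
  \int[m1]_x \int[m2]_y f (x, y) = \int[m2]_y \int[m1]_x f (x, y).
Proof.
move=> mf f0.
exact (@fubini_tonelli _ _ _ _ _ (finite_copy m1T) (finite_copy m2T) f mf f0).
Qed.

Section ge0_integral_bounds.
Context {d} {T : measurableType d} {R : realType} (m : {measure set T -> \bar R}).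

(* No measurability is required: the nonnegative integral is a supremum over
   simple minorants. *)
Lemma ge0_le_integralT (f h : T -> \bar R) :
  (forall x, 0 <= f x) -> (forall x, f x <= h x) ->
  \int[m]_x f x <= \int[m]_x h x.
Proof.
move=> f0 fh; have h0 x : 0 <= h x by exact: le_trans (fh x).
rewrite !ge0_integralTE//; apply: ereal_sup_le => _ [s /= sf <-].
by exists s => //= x; exact: le_trans (sf x) (fh x).
Qed.

Lemma mule_measure_le_integral {S : set T} {f : T -> \bar R} {a : \bar R} :
  measurable S -> 0 <= a -> (forall x, 0 <= f x) -> (forall x, S x -> a <= f x) ->
  a * m S <= \int[m]_x f x.
Proof.
move=> mS a0 f0 Sf.
rewrite -(setIT S) -integral_indic// -ge0_integralZl//; last first.
  exact/measurable_EFinP/measurable_indic.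
apply: ge0_le_integralT => x; first by rewrite mule_ge0// lee_fin.
rewrite indicE; case: (boolP (x \in S)) => [/set_mem/Sf|_]; last by rewrite mule0.
by rewrite mule1.
Qed.

(* The dominating function [a + oo * 1_(~` B)] has integral [a * m setT]
   because [m] does not charge [~` B]. *)
Lemma integral_le_mule_mass {B : set T} {f : T -> \bar R} {a : \bar R} :
  measurable B -> 0 <= a -> m (~` B) = 0 -> (forall x, 0 <= f x) ->
  (forall x, B x -> f x <= a) ->
  \int[m]_x f x <= a * m setT.
Proof.
move=> mB a0 mB0 f0 Bf.
pose h x := a + +oo * (\1_(~` B) x)%:E.
have mh : measurable_fun setT (fun x => +oo * (\1_(~` B) x)%:E : \bar R).
  by apply: measurable_funeM; exact/measurable_EFinP/measurable_indic/measurableC.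
have -> : a * m setT = \int[m]_x h x.
  rewrite ge0_integralD// integral_cst// ge0_integralZl//; last first.
    exact/measurable_EFinP/measurable_indic/measurableC.
  by rewrite integral_indic ?setIT ?mB0 ?mule0 ?adde0//; exact: measurableC.
apply: ge0_le_integralT => // x; rewrite /h indicE.
have [Bx|nBx] := pselect (B x).
  by rewrite memNset ?mule0 ?adde0 ?Bf//; apply.
by rewrite mem_set// mule1 addey ?leey// gt_eqF// (lt_le_trans ltNy0 a0).
Qed.

End ge0_integral_bounds.

Lemma measureT_carried {d} {T : measurableType d} {R : realType}
    {m : {measure set T -> \bar R}} {B : set T} :
  measurable B -> m (~` B) = 0 -> m setT = m B.
Proof.
move=> mB mB0; rewrite -(setUv B) measureU ?setICr//; last exact: measurableC.
by rewrite [X in _ + X]mB0 adde0.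
Qed.

Local Notation gv g t := (fine (g t)).

Section decreasing_profile.
Context {R : realType} {g : R -> \bar R}.
Hypothesis g_decr : forall s t : R, (0 <= s)%R -> (s < t)%R -> g t < g s.
Hypothesis g_gt0 : forall t : R, (0 <= t)%R -> 0 < g t.

Lemma profile_le s t : (0 <= s)%R -> (s <= t)%R -> g t <= g s.
Proof. by move=> s0; rewrite le_eqVlt => /predU1P[->//|st]; exact/ltW/g_decr. Qed.

(* [g t < g (t / 2)] rules out [g t = +oo] for [t > 0]. *)
Lemma profile_fin_num t : (0 < t)%R -> g t \is a fin_num.
Proof.
move=> t0; have t20 : (0 < t / 2)%R by rewrite divr_gt0.
have gt_lt : g t < g (t / 2) by apply: g_decr; [exact: ltW | lra].
rewrite fin_numE -ltNye -ltey (lt_trans _ (g_gt0 _ (ltW t0)))//.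
by rewrite (lt_le_trans gt_lt) ?leey.
Qed.

Lemma profileE t : (0 < t)%R -> g t = (gv g t)%:E.
Proof. by move=> t0; rewrite fineK// profile_fin_num. Qed.

Lemma profile_fine_gt0 t : (0 < t)%R -> (0 < gv g t)%R.
Proof. by move=> t0; rewrite -lte_fin -profileE//; exact/g_gt0/ltW. Qed.

Lemma profile_fine_le s t : (0 < s)%R -> (s <= t)%R -> (gv g t <= gv g s)%R.
Proof.
move=> s0 st; rewrite -lee_fin -!profileE//; last exact: lt_le_trans st.
exact: profile_le (ltW s0) st.
Qed.

Lemma profile_fine_half {cD : R} :
    (forall r : R, (0 < r)%R -> g (r / 2)%R <= cD%:E * g r) ->
  forall r : R, (0 < r)%R -> (gv g (r / 2) <= cD * gv g r)%R.
Proof.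
move=> g_half r r0; rewrite -lee_fin EFinM -!profileE//; first exact: g_half.
by rewrite divr_gt0.
Qed.

Lemma profile_fine_twice {cD : R} :
    (forall r : R, (0 < r)%R -> g (r / 2)%R <= cD%:E * g r) ->
  forall s : R, (0 < s)%R -> (gv g s <= cD * gv g (2 * s))%R.
Proof.
move=> g_half s s0; have := profile_fine_half g_half _ (mulr_gt0 (ltr0Sn _ 1) s0).
by rewrite mulrC mulKf.
Qed.

Lemma profile_fine_iter {M0 alpha0 : R} : (0 <= M0)%R -> (0 < alpha0)%R ->
    (forall r : R, (0 < r)%R -> M0%:E * g r <= g (alpha0 * r)%R) ->
  forall (n : nat) (s a : R), (0 < s)%R -> (0 < a <= alpha0 ^+ n)%R ->
    (M0 ^+ n * gv g s <= gv g (a * s))%R.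
Proof.
move=> M00 alpha00 g_scale n s a s0 /andP[a0 an].
have iter : (M0 ^+ n * gv g s <= gv g (alpha0 ^+ n * s))%R.
  elim: n {an} => [|n IH]; first by rewrite !expr0 !mul1r.
  have ns0 : (0 < alpha0 ^+ n * s)%R by rewrite mulr_gt0// exprn_gt0.
  rewrite !exprS -!mulrA (le_trans (ler_wpM2l M00 IH))//.
  by rewrite -lee_fin EFinM -!profileE ?mulr_gt0 ?exprn_gt0//; exact: g_scale.
by apply: (le_trans iter); apply: profile_fine_le; rewrite ?mulr_gt0// ler_pM2r.
Qed.

End decreasing_profile.

Section metric.
Context {R : realType} {X : Type} {rho : X -> X -> R}.
Hypothesis rho_metric : is_metric rho.
Local Open Scope ring_scope.

Lemma rho_ge0 x y : 0 <= rho x y. Proof. by case: rho_metric. Qed.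
Lemma rho_xx x : rho x x = 0. Proof. by case: rho_metric => _ h _ _; apply/h. Qed.
Lemma rhoC x y : rho x y = rho y x. Proof. by case: rho_metric. Qed.
Lemma rho_triangle x y z : rho x z <= rho x y + rho y z.
Proof. by case: rho_metric. Qed.

Lemma rball_open x r : ropen rho (rball rho x r).
Proof.
rewrite /rball => y /= xy; exists (r - rho x y); first by rewrite subr_gt0.
by move=> z; rewrite /rball /= => yz; have := rho_triangle x y z; lra.
Qed.

Lemma rannulus_closed x a b : rclosed rho [set y | a <= rho x y <= b].
Proof.
move=> y /= /negP; rewrite negb_and -!ltNge => /orP[ya|yb].
  exists (a - rho x y); first by rewrite subr_gt0.
  move=> z; rewrite /rball /= => yz /andP[az _].
  by have := rho_triangle x y z; lra.
exists (rho x y - b); first by rewrite subr_gt0.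
move=> z; rewrite /rball /= => yz /andP[_ zb].
by have := rho_triangle x z y; rewrite (rhoC z y); lra.
Qed.

Lemma rclosure_sub (U V : set X) : U `<=` V -> rclosure rho U `<=` rclosure rho V.
Proof.
move=> UV x /= xU e e0; have [y [Uy xy]] := xU e e0.
by exists y; split => //; apply: UV.
Qed.

Lemma calU_rball {X0 : set X} {x s} :
  (s%:E < R0 rho X0 x)%E -> calU rho X0 (rball rho x s).
Proof.
move=> /ereal_sup_gt[_ [r [r0 rX0] <-]]; rewrite lte_fin => sr.
split; first exact: rball_open.
by apply: subset_trans rX0; apply: rclosure_sub => y; rewrite /rball /=; lra.
Qed.

End metric.

Section kernel_estimates.
Context {R : realType} {d} {X : measurableType d} {rho : X -> X -> R}
  {G : X -> X -> \bar R} {g : R -> \bar R} {c : R}.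
Hypothesis rho_metric : is_metric rho.
Hypothesis open_measurable : forall U, ropen rho U -> measurable U.
Hypothesis G_gt0 : forall x y, 0 < G x y.
Hypothesis G_measurable : measurable_fun [set: X * X] (fun p : X * X => G p.1 p.2).
Hypothesis g_decr : forall s t : R, (0 <= s)%R -> (s < t)%R -> g t < g s.
Hypothesis g_gt0 : forall t : R, (0 <= t)%R -> 0 < g t.
Hypothesis c_gt0 : (0 < c)%R.
Hypothesis G_comparable :
  forall x y, (c^-1)%R%:E * g (rho x y) <= G x y <= c%:E * g (rho x y).

Let c_ge0 : (0 <= c)%R := ltW c_gt0.

Lemma G_ge_near y z s : (0 < s)%R -> (rho y z <= s)%R ->
  (c^-1 * gv g s)%:E <= G y z.
Proof.
move=> s0 yz; apply: le_trans (proj1 (andP (G_comparable y z))).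
rewrite EFinM -(profileE g_decr g_gt0)// lee_pmul2l ?lte_fin ?invr_gt0//.
exact: profile_le g_decr _ _ (rho_ge0 rho_metric y z) yz.
Qed.

Lemma G_le_far y z s : (0 < s)%R -> (s <= rho y z)%R ->
  G y z <= (c * gv g s)%:E.
Proof.
move=> s0 yz; apply: le_trans (proj2 (andP (G_comparable y z))) _.
rewrite EFinM -(profileE g_decr g_gt0)// lee_pmul2l ?lte_fin//.
exact: profile_le g_decr _ _ (ltW s0) yz.
Qed.

Lemma G_le_swap y z : G y z <= (c * c)%:E * G z y.
Proof.
apply: le_trans (proj2 (andP (G_comparable y z))) _.
rewrite (rhoC rho_metric y z) EFinM -muleA lee_pmul2l ?lte_fin//.
apply: le_trans (lee_wpmul2l _ (proj1 (andP (G_comparable z y)))); last first.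
  by rewrite lee_fin ltW.
by rewrite muleA -EFinM divff ?gt_eqF// mul1e.
Qed.

Lemma Gpot_ge0 m y : 0 <= Gpot G m y.
Proof. by apply: integral_ge0 => z _; exact: ltW. Qed.

Lemma Gpot_ge_near {nu : {measure set X -> \bar R}} {B : set X} x s :
  measurable B -> nu (~` B) = 0 -> (0 < s)%R ->
  (forall z, B z -> rho x z <= s)%R ->
  (c^-1 * gv g s)%:E * nu setT <= Gpot G nu x.
Proof.
move=> mB nuB s0 Bs; rewrite (measureT_carried mB nuB).
apply: mule_measure_le_integral => // [|z|z /Bs]; last exact: G_ge_near.
- by rewrite lee_fin mulr_ge0 ?invr_ge0 ?ltW// (profile_fine_gt0 g_decr g_gt0).
- exact: ltW.
Qed.

Lemma Gpot_le_far {nu : {measure set X -> \bar R}} {B : set X} y s :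
  measurable B -> nu (~` B) = 0 -> (0 < s)%R ->
  (forall z, B z -> s <= rho y z)%R ->
  Gpot G nu y <= (c * gv g s)%:E * nu setT.
Proof.
move=> mB nuB s0 Bs.
apply: (integral_le_mule_mass nu mB _ nuB) => [|z|z /Bs]; last exact: G_le_far.
- by rewrite lee_fin mulr_ge0 ?ltW// (profile_fine_gt0 g_decr g_gt0).
- exact: ltW.
Qed.

(* Fubini exchanges the two integrations; the kernel is symmetric up to
   the factor [c * c]. *)
Lemma integral_Gpot_le {sigma nu : {measure set X -> \bar R}} :
  sigma setT < +oo -> nu setT < +oo -> (forall x, Gpot G sigma x <= 1) ->
  \int[sigma]_y Gpot G nu y <= (c * c)%:E * nu setT.
Proof.
move=> sigmaT nuT sigma_pot.
rewrite /Gpot (fubini_tonelli_finite sigmaT nuT (fun p => G p.1 p.2))//;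
  last by move=> p; exact: ltW.
apply: (integral_le_mule_mass nu measurableT) => // [|||z _].
- by rewrite lee_fin mulr_ge0// ltW.
- by rewrite setCT measure0.
- by move=> z; apply: integral_ge0 => y _; exact: ltW.
rewrite /=; apply: (@le_trans _ _ (\int[sigma]_y ((c * c)%:E * G z y))).
  by apply: ge0_le_integralT => y; [exact: ltW | exact: G_le_swap].
rewrite (ge0_integralZl_EFin _ _ (fun y _ => ltW (G_gt0 z y))
  (measurable_fun_pair2 z G_measurable)) ?mulr_ge0 ?c_ge0//.
by rewrite -[leRHS]mule1 lee_wpmul2l ?lee_fin ?mulr_ge0 ?c_ge0//; exact: sigma_pot.
Qed.

Lemma mass_rball_le (sigma : {measure set X -> \bar R}) x s : (0 < s)%R ->
  Gpot G sigma x <= 1 -> sigma (rball rho x s) <= (c / gv g s)%:E.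
Proof.
move=> s0 sigma_pot; have gs0 := profile_fine_gt0 g_decr g_gt0 _ s0.
have k0 : (0 < c^-1 * gv g s)%R by rewrite mulr_gt0 ?invr_gt0.
rewrite -[leRHS]mule1 (_ : c / gv g s = (c^-1 * gv g s)^-1)%R; last first.
  by rewrite invfM invrK mulrC.
rewrite lee_pdivlMl//; apply: le_trans sigma_pot.
apply: mule_measure_le_integral => [|||z /ltW]; last exact: G_ge_near.
- exact/open_measurable/rball_open.
- by rewrite lee_fin ltW.
- by move=> z; exact: ltW.
Qed.

(* A measure of potential at most 1 carried by [B(x,t)] puts mass at most
   [c / g s] on [B(x,s)] and, by reciprocity, at most [c^2 nu(X)] on the
   annulus where [G nu >= 1]. *)
Lemma cap_rball_le (nu : {measure set X -> \bar R}) x s t : (0 < s)%R ->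
  nu setT < +oo -> (forall y, (s <= rho x y <= t)%R -> 1 <= Gpot G nu y) ->
  cap G (rball rho x t) <= (c / gv g s)%:E + (c * c)%:E * nu setT.
Proof.
move=> s0 nuT nu_pot.
apply: ge_ereal_sup => _ [sigma [sigmaT [sigma_out sigma_pot]] <-].
set A := [set y | (s <= rho x y <= t)%R].
have mA : measurable A.
  by rewrite -[A]setCK; exact/measurableC/open_measurable/rannulus_closed.
have mball r : measurable (rball rho x r) by exact/open_measurable/rball_open.
rewrite (measureT_carried (mball t) sigma_out).
have ball_sub : sigma (rball rho x t) <= sigma (rball rho x s `|` A).
  rewrite le_measure ?inE//; first exact: measurableU.
  move=> y; rewrite /rball /= => yt; have [ys|sy] := ltP (rho x y) s.
    by left.
  by right; rewrite /A /= sy ltW.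
apply: le_trans ball_sub _.
apply: (le_trans (measureU2 sigma (mball s) mA)); apply: leeD.
  exact: mass_rball_le.
apply: le_trans _ (integral_Gpot_le sigmaT nuT sigma_pot).
rewrite -[leLHS]mul1e; apply: mule_measure_le_integral => //.
exact: Gpot_ge0.
Qed.

End kernel_estimates.

Section harmonic_measures.
Context {R : realType} {d} {X : measurableType d} {rho : X -> X -> R}
  {mu : set X -> X -> {measure set X -> \bar R}}.
Hypothesis mu_le1 : forall U x, ropen rho U -> mu U x setT <= 1.
Hypothesis mu_outside : forall U x, ropen rho U -> ~ U x -> meas_eq (mu U x) \d_x.
Hypothesis mu_sweep : forall U V x, ropen rho U -> ropen rho V -> V `<=` U ->
  forall E, measurable E -> mu U x E = \int[mu V x]_y mu U y E.

Lemma harmonic_measureE U x E : ropen rho U -> measurable E ->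
  mu U x E = (fine (mu U x E))%:E.
Proof.
move=> oU mE; rewrite fineK// ge0_fin_numE//.
have muE : mu U x E <= mu U x setT by rewrite le_measure ?inE.
exact: le_lt_trans muE (le_lt_trans (mu_le1 _ x oU) (ltry 1)).
Qed.

Lemma harmonic_mass_outside U y : ropen rho U -> ~ U y -> mu U y setT = 1.
Proof.
by move=> oU Uy; rewrite (mu_outside _ _ oU Uy _ measurableT); exact: diracT.
Qed.

Lemma harmonic_mass_le_sweep U V x (S : set X) (C : R) :
  ropen rho U -> ropen rho V -> V `<=` U -> measurable S -> (0 <= C)%R ->
  (forall y, ~ S y -> mu U y setT <= C%:E) ->
  mu U x setT <= mu V x S + C%:E.
Proof.
move=> oU oV VU mS C0 far; rewrite (mu_sweep _ _ x oU oV VU _ measurableT).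
apply: (@le_trans _ _ (\int[mu V x]_y ((\1_S y)%:E + C%:E))).
  apply: ge0_le_integralT => y //; rewrite indicE.
  have [Sy|nSy] := pselect (S y).
    by rewrite mem_set// (le_trans (mu_le1 _ y oU))// -EFinD lee_fin lerDl.
  by rewrite memNset// add0e; exact: far.
rewrite ge0_integralD//; last exact/measurable_EFinP/measurable_indic.
rewrite integral_indic ?setIT// integral_cst// leeD2l//.
by rewrite -[leRHS]mule1 lee_wpmul2l ?lee_fin// mu_le1.
Qed.

End harmonic_measures.

Section sweep_arithmetic.
Local Open Scope ring_scope.
Context {R : realFieldType}.

(* Chosen so that [c1^2 * sweep_delta] is half of the lower bound
   [1 / (3 c^3 c2 cD)] obtained for [g(2t) nu(X) / (2 c)]; the other half then
   bounds [c1^2] times the harmonic measure. *)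
Definition sweep_delta (c c1 c2 cD : R) := (6 * c ^+ 3 * c2 * cD * c1 ^+ 2)^-1.

Lemma sweep_delta_gt0 (c c1 c2 cD : R) :
  0 < c -> 0 < c1 -> 0 < c2 -> 0 < cD -> 0 < sweep_delta c c1 c2 cD.
Proof. by move=> *; rewrite invr_gt0 !mulr_gt0 ?exprn_gt0. Qed.

Lemma capacity_mass_arith {c c2 cD n g2t gt gat : R} :
  0 < c -> 0 < c2 -> 0 < cD -> 0 <= n -> 0 < gt -> 0 < gat ->
  (c2 * gt)^-1 <= c / gat + c * c * n -> 3 * c * c2 * gt <= gat ->
  gt <= cD * g2t ->
  2 <= 3 * c ^+ 2 * c2 * cD * (g2t * n).
Proof.
move=> c_gt0 c2_gt0 cD_gt0 n_ge0 gt_gt0 gat_gt0 cap near doub.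
have u_gt0 : 0 < c2 * gt by rewrite mulr_gt0.
have inner : c / gat <= (3 * (c2 * gt))^-1.
  by rewrite ler_pdivrMr// ler_pdivlMl ?mulr_gt0//; nra.
have mass : 2 <= 3 * (c2 * gt) * (c * c * n).
  have e : (c2 * gt)^-1 = 3 * (3 * (c2 * gt))^-1 by field; lra.
  have : 2 * (3 * (c2 * gt))^-1 <= c * c * n.
    move: cap inner; rewrite e.
    move: (3 * (c2 * gt))^-1 (c / gat) (c * c * n) => w a b; lra.
  by rewrite mulrC ler_pdivrMl// mulr_gt0.
apply: le_trans mass _.
have : c2 * gt * (3 * c * c * n) <= c2 * (cD * g2t) * (3 * c * c * n).
  by rewrite ler_wpM2r ?ler_pM2l// !mulr_ge0//; lra.
by rewrite expr2; lra.
Qed.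

Lemma sweep_arith {c c1 c2 cD P eA eB n gr g2t : R} :
  1 <= c -> 1 <= c1 -> 0 < c2 -> 0 < cD -> 0 <= n ->
  eA <= P + c * gr * n ->
  eB - c1 * sweep_delta c c1 c2 cD < c1 * eA ->
  c^-1 * g2t * n <= c1 * eB ->
  2 * c ^+ 2 * c1 ^+ 2 * gr <= g2t ->
  2 <= 3 * c ^+ 2 * c2 * cD * (g2t * n) ->
  sweep_delta c c1 c2 cD < P.
Proof.
move=> c_ge1 c1_ge1 c2_gt0 cD_gt0 n_ge0 sweep G1x equilibrium far mass.
set delta := sweep_delta c c1 c2 cD.
have c_gt0 : 0 < c by lra.
have c1_gt0 : 0 < c1 by lra.
have far_n : c1 ^+ 2 * (c * gr * n) <= (2 * c)^-1 * (g2t * n).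
  rewrite ler_pdivlMl ?mulr_gt0//.
  have : 2 * c ^+ 2 * c1 ^+ 2 * gr * n <= g2t * n by rewrite ler_wpM2r.
  by rewrite !expr2; nra.
have upper : (2 * c)^-1 * (g2t * n) < c1 ^+ 2 * (P + delta).
  have ci : c^-1 * g2t * n = 2 * ((2 * c)^-1 * (g2t * n)) by field; lra.
  have G1x_c1 : c1 * (eB - c1 * delta) < c1 * (c1 * eA) by rewrite ltr_pM2l.
  have sweep1 : c1 ^+ 2 * eA <= c1 ^+ 2 * (P + c * gr * n).
    by apply: ler_wpM2l => //; exact: exprn_ge0 (ltW c1_gt0).
  move: equilibrium G1x_c1 sweep1 far_n; rewrite ci !expr2.
  by move: ((2 * c)^-1 * (g2t * n)) => W; nra.
have lower : 2 * c1 ^+ 2 * delta <= (2 * c)^-1 * (g2t * n).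
  have -> : 2 * c1 ^+ 2 * delta = (2 * c)^-1 * (2 / (3 * c ^+ 2 * c2 * cD)).
    rewrite /delta /sweep_delta; field.
    by rewrite (gt_eqF cD_gt0) (gt_eqF c2_gt0) (gt_eqF c_gt0) (gt_eqF c1_gt0).
  apply: ler_wpM2l; first by rewrite invr_ge0; lra.
  by rewrite ler_pdivrMr ?mulr_gt0 ?exprn_gt0// mulrC.
have c12_gt0 : 0 < c1 ^+ 2 by rewrite exprn_gt0.
nra.
Qed.

End sweep_arithmetic.

Section sweeping_estimate.
Context {R : realType} {d} {X : measurableType d} {rho : X -> X -> R}
  {X0 : set X} {mu : set X -> X -> {measure set X -> \bar R}}
  {G : X -> X -> \bar R} {c1 : R} {g : R -> \bar R} {c cD M0 alpha0 c2 : R}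
  {k : nat} {alpha : R}.
Hypothesis rho_metric : is_metric rho.
Hypothesis open_measurable : forall U, ropen rho U -> measurable U.
Hypothesis mu_le1 : forall U x, ropen rho U -> mu U x setT <= 1.
Hypothesis mu_outside : forall U x, ropen rho U -> ~ U x -> meas_eq (mu U x) \d_x.
Hypothesis mu_sweep : forall U V x, ropen rho U -> ropen rho V -> V `<=` U ->
  forall E, measurable E -> mu U x E = \int[mu V x]_y mu U y E.
Hypothesis G_gt0 : forall x y, 0 < G x y.
Hypothesis G_measurable : measurable_fun [set: X * X] (fun p : X * X => G p.1 p.2).
Hypothesis c1_ge1 : (1 <= c1)%R.
Hypothesis G1 : forall (U : set X) (x : X) (delta : R) (A : set X),
  calU rho X0 U -> U x -> (0 < delta)%R -> rclosed rho A -> A `<=` U ->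
  exists (B : set X) (nu : {measure set X -> \bar R}),
    [/\ rclosed rho B, B `<=` U & rnbhd_of rho A B] /\
    [/\ nu setT < +oo, nu (~` B) = 0,
        mu (~` B) x setT - delta%:E < c1%:E * mu (~` A) x setT &
        forall y, mu (~` A) y setT <= Gpot G nu y <= c1%:E * mu (~` B) y setT].
Hypothesis g_decr : forall s t : R, (0 <= s)%R -> (s < t)%R -> g t < g s.
Hypothesis g_gt0 : forall t : R, (0 <= t)%R -> 0 < g t.
Hypotheses (c_ge1 : (1 <= c)%R) (cD_ge1 : (1 <= cD)%R) (M0_ge1 : (1 <= M0)%R).
Hypothesis alpha0_gt0 : (0 < alpha0)%R.
Hypothesis g_half : forall r : R, (0 < r)%R -> g (r / 2)%R <= cD%:E * g r.
Hypothesis g_scale : forall r : R, (0 < r)%R -> M0%:E * g r <= g (alpha0 * r)%R.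
Hypothesis G_comparable :
  forall x y, (c^-1)%R%:E * g (rho x y) <= G x y <= c%:E * g (rho x y).
Hypothesis c2_ge1 : (1 <= c2)%R.
Hypothesis G3 : forall (x : X) (r : R), X0 x -> (0 < r)%R -> r%:E < R0 rho X0 x ->
  ((c2 * fine (g r))^-1)%R%:E <= cap G (rball rho x r).
Hypothesis M_le :
  (Num.max (2 * cD ^+ 2 * c ^+ 2 * c1 ^+ 2) (3 * c * c2) <= M0 ^+ k)%R.
Hypothesis alpha0k_lt : (alpha0 ^+ k < 4^-1)%R.
Hypothesis alpha_bounds : (0 < alpha <= alpha0 ^+ k)%R.

Let c_gt0 : (0 < c)%R. Proof. exact: lt_le_trans ltr01 c_ge1. Qed.
Let c1_gt0 : (0 < c1)%R. Proof. exact: lt_le_trans ltr01 c1_ge1. Qed.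
Let cD_gt0 : (0 < cD)%R. Proof. exact: lt_le_trans ltr01 cD_ge1. Qed.
Let c2_gt0 : (0 < c2)%R. Proof. exact: lt_le_trans ltr01 c2_ge1. Qed.
Let alpha_gt0 : (0 < alpha)%R. Proof. by case/andP: alpha_bounds. Qed.

Let profile_scale s : (0 < s)%R -> (M0 ^+ k * gv g s <= gv g (alpha * s))%R.
Proof.
move=> s0; apply: (profile_fine_iter g_decr g_gt0 _ alpha0_gt0 g_scale) => //.
exact: le_trans ler01 M0_ge1.
Qed.

Lemma profile_far_le r : (0 < r)%R ->
  (2 * c ^+ 2 * c1 ^+ 2 * gv g (r / 2) <= gv g (2 * (alpha * r)))%R.
Proof.
move=> r0; have r2 : (0 < 2 * r)%R by rewrite mulr_gt0.
have half1 := profile_fine_half g_decr g_gt0 g_half _ r0.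
have half2 := profile_fine_twice g_decr g_gt0 g_half _ r0.
have Mk : (2 * cD ^+ 2 * c ^+ 2 * c1 ^+ 2 <= M0 ^+ k)%R.
  by apply: le_trans M_le; rewrite le_max lexx.
have := profile_scale _ r2; rewrite mulrCA => scale.
have g2r := profile_fine_gt0 g_decr g_gt0 _ r2.
apply: le_trans scale.
apply: (@le_trans _ _ (2 * cD ^+ 2 * c ^+ 2 * c1 ^+ 2 * gv g (2 * r))%R).
  have cc1 : (0 <= 2 * c ^+ 2 * c1 ^+ 2)%R.
    by rewrite !mulr_ge0 ?exprn_ge0 ?ltW.
  have : (gv g (r / 2) <= cD * (cD * gv g (2 * r)))%R.
    by apply: le_trans half1 _; rewrite ler_pM2l.
  by move/(ler_wpM2l cc1); rewrite !expr2; lra.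
by rewrite ler_pM2r.
Qed.

Lemma profile_near_ge t : (0 < t)%R ->
  (3 * c * c2 * gv g t <= gv g (alpha * t))%R.
Proof.
move=> t0; apply: le_trans (profile_scale _ t0); rewrite ler_pM2r.
  by apply: le_trans M_le; rewrite le_max lexx orbT.
exact: profile_fine_gt0 g_decr g_gt0 _ t0.
Qed.

Section annulus.
Variables (x : X) (r : R).
Hypothesis r_gt0 : (0 < r)%R.

Let t := (alpha * r)%R.
Let A := [set y | (alpha * t <= rho x y <= t)%R].
Let V := rball rho x (alpha * t).

Let t_gt0 : (0 < t)%R. Proof. by rewrite mulr_gt0. Qed.

Let t4_le : (4 * t <= r)%R.
Proof.
by move: alpha_bounds alpha0k_lt r_gt0 => /andP[_ ak] ak4; rewrite /t; nra.
Qed.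

Let lt_R0 s : (s <= 2 * t)%R -> r%:E < R0 rho X0 x -> s%:E < R0 rho X0 x.
Proof.
move=> st; apply: le_lt_trans; rewrite lee_fin; apply: le_trans st _.
by move: t4_le t_gt0; lra.
Qed.

Let A_closed : ropen rho (~` A). Proof. exact: rannulus_closed. Qed.

Let A_sub : A `<=` rball rho x (2 * t).
Proof. by move=> y; rewrite /A /rball /= => /andP[_ yt]; move: yt t_gt0; lra. Qed.

Section equilibrium_measure.
Context {B : set X} {nu : {measure set X -> \bar R}} {n : R}.
Hypotheses (mB : measurable B) (B_sub : B `<=` rball rho x (2 * t)).
Hypotheses (nuB : nu (~` B) = 0) (nuE : nu setT = n%:E).
Hypothesis nu_pot :
  forall y, mu (~` A) y setT <= Gpot G nu y <= c1%:E * mu (~` B) y setT.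

Let n_ge0 : (0 <= n)%R. Proof. by rewrite -lee_fin -nuE. Qed.

Lemma annulus_sweep_le :
  mu (~` A) x setT <= mu V x (rball rho x r) + (c * gv g (r / 2) * n)%:E.
Proof.
have r2_gt0 : (0 < r / 2)%R by rewrite divr_gt0.
apply: (harmonic_mass_le_sweep mu_le1 mu_sweep) => //.
- exact: rball_open.
- move=> y; rewrite /V /rball /A /= => yV /andP[+ _]; by rewrite leNgt yV.
- exact/open_measurable/rball_open.
- by rewrite !mulr_ge0// ltW// (profile_fine_gt0 g_decr g_gt0).
move=> y; rewrite /rball /= => /negP; rewrite -leNgt => ry.
apply: le_trans (proj1 (andP (nu_pot y))) _; rewrite EFinM -nuE.
apply: (Gpot_le_far G_gt0 g_decr g_gt0 c_gt0 G_comparable _ _ mB nuB r2_gt0).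
move=> z /B_sub; rewrite /rball /= => xz.
have := rho_triangle rho_metric x z y; rewrite (rhoC rho_metric z y).
by move: t4_le; lra.
Qed.

Lemma equilibrium_mass_le :
  (c^-1 * gv g (2 * t) * n)%:E <= c1%:E * mu (~` B) x setT.
Proof.
apply: le_trans (proj2 (andP (nu_pot x))); rewrite EFinM -nuE.
apply: (Gpot_ge_near rho_metric G_gt0 g_decr g_gt0 c_gt0 G_comparable _ _ mB nuB).
  by rewrite mulr_gt0.
by move=> z /B_sub /ltW.
Qed.

(* Test (G3) against [nu]: the capacity of [B(x,t)] is at most
   [c / g(alpha t) + c^2 nu(X)], since [G nu >= 1] on the annulus [A]. *)
Lemma equilibrium_mass_ge : X0 x -> r%:E < R0 rho X0 x ->
  (2 <= 3 * c ^+ 2 * c2 * cD * (gv g (2 * t) * n))%R.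
Proof.
move=> X0x rR; have gt_gt0 := profile_fine_gt0 g_decr g_gt0 _ t_gt0.
have t_le : (t <= 2 * t)%R by rewrite ler_pMl// ler1n.
have : ((c2 * gv g t)^-1)%:E <= (c / gv g (alpha * t))%:E + (c * c * n)%:E.
  apply: le_trans (G3 _ _ X0x t_gt0 (lt_R0 _ t_le rR)) _.
  have nuT : nu setT < +oo by rewrite nuE ltry.
  rewrite [X in _ + X]EFinM -nuE; apply: (cap_rball_le rho_metric open_measurable
    G_gt0 G_measurable g_decr g_gt0 c_gt0 G_comparable _ _ _ _ _ nuT) => [|y Ay].
    by rewrite mulr_gt0.
  rewrite -(harmonic_mass_outside mu_outside _ y A_closed); last by move/(_ Ay).
  exact: (proj1 (andP (nu_pot y))).
rewrite -EFinD lee_fin => cap_le.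
apply: (capacity_mass_arith c_gt0 c2_gt0 cD_gt0 n_ge0 gt_gt0 _ cap_le).
- exact: profile_fine_gt0 g_decr g_gt0 _ (mulr_gt0 alpha_gt0 t_gt0).
- exact: profile_near_ge.
- exact: (profile_fine_twice g_decr g_gt0 g_half _ t_gt0).
Qed.

End equilibrium_measure.

Lemma harmonic_measure_rball_gt : X0 x -> r%:E < R0 rho X0 x ->
  (sweep_delta c c1 c2 cD)%:E <
    mu (rball rho x (alpha ^+ 2 * r)) x (rball rho x r).
Proof.
move=> X0x rR; have delta_gt0 : (0 < c1 * sweep_delta c c1 c2 cD)%R.
  by rewrite mulr_gt0// sweep_delta_gt0.
have xU : rball rho x (2 * t) x by rewrite /rball /= rho_xx// mulr_gt0.
have [B [nu [[B_closed B_sub _] [nuT nuB G1x nu_pot]]]] :=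
  G1 _ _ _ _ (calU_rball rho_metric (lt_R0 _ (lexx _) rR)) xU delta_gt0
    A_closed A_sub.
have mB : measurable B.
  by rewrite -[B]setCK; exact: measurableC (open_measurable _ B_closed).
have nuE : nu setT = (fine (nu setT))%:E by rewrite fineK// ge0_fin_numE.
have := annulus_sweep_le mB B_sub nuB nuE nu_pot.
have := equilibrium_mass_le mB B_sub nuB nuE nu_pot.
have := equilibrium_mass_ge nuE nu_pot X0x rR.
have mball : measurable (rball rho x r) by exact/open_measurable/rball_open.
rewrite (_ : alpha ^+ 2 * r = alpha * t)%R; last by rewrite /t mulrA expr2.
move: G1x; rewrite (harmonic_measureE mu_le1 _ _ _ A_closed measurableT).
rewrite (harmonic_measureE mu_le1 _ _ _ B_closed measurableT).
rewrite (harmonic_measureE mu_le1 _ _ _ (rball_open rho_metric x _) mball).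
rewrite -!EFinD -!EFinM !lee_fin !lte_fin => G1x mass equilibrium sweep.
apply: (sweep_arith c_ge1 c1_ge1 c2_gt0 cD_gt0 _ sweep G1x equilibrium _
  mass).
- by rewrite -lee_fin -nuE.
- exact: profile_far_le.
Qed.

End annulus.

End sweeping_estimate.

Theorem proposition4p11 (R : realType) (d : measure_display) (X : measurableType d)
  (rho : X -> X -> R) (X0 : set X)
  (mu : set X -> X -> {measure set X -> \bar R})
  (G : X -> X -> \bar R)
  (c1 : R) (g : R -> \bar R) (c cD M0 alpha0 : R) (c2 : R)
  (k : nat) (alpha : R) :
  (* (X, rho) separable metric space, measurable sets = Borel sets *)
  is_metric rho -> separable_rho rho ->
  (forall A : set X, measurable A <-> <<s ropen rho >> A) ->
  ropen rho X0 ->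
  (* the family of measures mu_x^U *)
  (forall U x, ropen rho U -> mu U x U = 0) ->
  (forall U x, ropen rho U -> mu U x setT <= 1) ->
  (forall U x, ropen rho U -> ~ U x -> meas_eq (mu U x) \d_x) ->
  (forall U E, ropen rho U -> measurable E ->
     umeasurable_fun (fun y => mu U y E)) ->
  (forall U V x, ropen rho U -> ropen rho V -> V `<=` U ->
     forall E, measurable E -> mu U x E = \int[mu V x]_y mu U y E) ->
  (* the kernel G : X x X -> (0, +oo], Borel *)
  (forall x y, 0 < G x y) ->
  measurable_fun [set: X * X] (fun p : X * X => G p.1 p.2) ->
  (* (G1) *)
  (1 <= c1)%R ->
  (forall (U : set X) (x : X) (delta : R) (A : set X),
     calU rho X0 U -> U x -> (0 < delta)%R -> rclosed rho A -> A `<=` U ->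
     exists (B : set X) (nu : {measure set X -> \bar R}),
       [/\ rclosed rho B, B `<=` U & rnbhd_of rho A B] /\
       [/\ nu setT < +oo, nu (~` B) = 0,
           mu (~` B) x setT - delta%:E < c1%:E * mu (~` A) x setT &
           forall y, mu (~` A) y setT <= Gpot G nu y <= c1%:E * mu (~` B) y setT]) ->
  (* (G2) *)
  (forall s t : R, (0 <= s)%R -> (s < t)%R -> g t < g s) ->
  {within [set t : R | (0 <= t)%R], continuous g} ->
  (forall t : R, (0 <= t)%R -> 0 < g t) ->
  (1 <= c)%R -> (1 <= cD)%R -> (1 <= M0)%R -> (0 < alpha0 < 1)%R ->
  (forall r : R, (0 < r)%R -> g (r / 2)%R <= cD%:E * g r) ->
  (forall r : R, (0 < r)%R -> M0%:E * g r <= g (alpha0 * r)%R) ->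
  (forall x y, (c^-1)%R%:E * g (rho x y) <= G x y <= c%:E * g (rho x y)) ->
  (* (G3) *)
  (1 <= c2)%R ->
  (forall (x : X) (r : R), X0 x -> (0 < r)%R -> r%:E < R0 rho X0 x ->
     ((c2 * fine (g r))^-1)%R%:E <= cap G (rball rho x r)) ->
  (* the constants *)
  let M := Num.max (2 * cD ^+ 2 * c ^+ 2 * c1 ^+ 2)%R (3 * c * c2)%R in
  (M <= M0 ^+ k)%R -> (alpha0 ^+ k < 4^-1)%R ->
  (0 < alpha <= alpha0 ^+ k)%R ->
  exists2 delta0 : R, (0 < delta0)%R &
    forall (x : X) (r : R), X0 x -> (0 < r)%R -> r%:E < R0 rho X0 x ->
      delta0%:E < mu (rball rho x (alpha ^+ 2 * r)%R) x (rball rho x r).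
Proof.
move=> rho_metric _ measurable_gen _ _ mu_le1 mu_outside _ mu_sweep G_gt0
  G_measurable c1_ge1 G1 g_decr _ g_gt0 c_ge1 cD_ge1 M0_ge1 /andP[alpha0_gt0 _]
  g_half g_scale G_comparable c2_ge1 G3 M M_le alpha0k_lt alpha_bounds.
have open_measurable U : ropen rho U -> measurable U.
  by move=> oU; apply/measurable_gen; exact: sub_gen_smallest.
exists (sweep_delta c c1 c2 cD); first by apply: sweep_delta_gt0; lra.
move=> x r X0x r_gt0.
exact: (harmonic_measure_rball_gt rho_metric open_measurable mu_le1 mu_outside
  mu_sweep G_gt0 G_measurable c1_ge1 G1 g_decr g_gt0 c_ge1 cD_ge1 M0_ge1
  alpha0_gt0 g_half g_scale G_comparable c2_ge1 G3 M_le alpha0k_lt alpha_bounds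
  x r r_gt0 X0x).
Qed.
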